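(* Let $\gamma>0$. For a multiset $S=\{G_1,\dots,G_N\}$ of $N\ge 2$ elements equipped with a nonnegative symmetric distance $D$, define the Energy diversity $$\mathrm{div}(S) = -\frac{1}{N(N-1)}\sum_{i\neq j}\frac{1}{D(G_i,G_j)^{\gamma}},$$ with the convention $1/0=+\infty$ (so $\mathrm{div}(S)=-\infty$ whenever two elements are at distance $0$). Then Energy satisfies both the monotonicity property and the uniqueness property.
   Context: Monotonicity: whenever $S,S'$ are multisets each consisting of $N$ distinct elements and $g:S\to S'$ is a bijection with $D(G_i,G_j)\le D(g(G_i),g(G_j))$ for all $G_i,G_j\in S$, with strict inequality for at least one pair, then $\mathrm{div}(S)<\mathrm{div}(S')$. Uniqueness: whenever $S$ consists of $N$ distinct elements $G_1,\dots,G_N$ and $S_{ij}=(S\setminus\{G_i\})\cup\{G_j\}$ for $j\neq i$ (i.e. $G_i$ is removed and a second copy of $G_j$ is added), then $\mathrm{div}(S)>\mathrm{div}(S_{ij})$. Here distinct elements are assumed to be at positive distance from each other. *)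

From HB Require Import structures.
From mathcomp Require Import all_boot all_order all_algebra all_fingroup.
From mathcomp Require Import all_classical all_reals all_analysis.
Set Implicit Arguments. Unset Strict Implicit. Unset Printing Implicit Defensive.
Import Order.TTheory GRing.Theory Num.Theory.
Local Open Scope ring_scope.

Definition energy_term (R : realType) (gamma : R) (d : R) : \bar R :=
  if d == 0 then +oo%E else ((d `^ gamma)^-1)%:E.

Definition energy_div (R : realType) (gamma : R) (X : Type) (D : X -> X -> R)
  (N : nat) (G : 'I_N -> X) : \bar R :=
  (- ((((N * (N - 1))%:R)^-1)%:E *
      \sum_(i < N) \sum_(j < N | j != i) energy_term gamma (D (G i) (G j))))%E.

Definition distinct_fam (R : realType) (X : Type) (D : X -> X -> R)
  (N : nat) (G : 'I_N -> X) : Prop :=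
  forall i j : 'I_N, i != j -> 0 < D (G i) (G j).

(* A bijection g : S -> S' between multisets of distinct elements is given by
   a permutation s of the indices: g (G i) = G' (s i). *)
Definition monotonicity (R : realType) (X : Type) (D : X -> X -> R) (N : nat)
  (div : ('I_N -> X) -> \bar R) : Prop :=
  forall (G G' : 'I_N -> X) (s : 'S_N),
    distinct_fam D G -> distinct_fam D G' ->
    (forall i j : 'I_N, D (G i) (G j) <= D (G' (s i)) (G' (s j))) ->
    (exists i j : 'I_N, D (G i) (G j) < D (G' (s i)) (G' (s j))) ->
    (div G < div G')%E.

Definition uniqueness (R : realType) (X : Type) (D : X -> X -> R) (N : nat)
  (div : ('I_N -> X) -> \bar R) : Prop :=
  forall (G : 'I_N -> X) (i j : 'I_N),
    distinct_fam D G -> j != i ->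
    (div (fun k => if k == i then G j else G k) < div G)%E.

From HB Require Import structures.
From mathcomp Require Import all_boot all_order all_algebra all_fingroup.
From mathcomp Require Import all_classical all_reals all_analysis.
From mathcomp Require Import zify.
Import Order.TTheory GRing.Theory Num.Theory.
Set Implicit Arguments. Unset Strict Implicit. Unset Printing Implicit Defensive.
Local Open Scope ring_scope.

(* When all distances are positive the energy diversity is finite, namely a
   negative multiple of the sum of the terms [1 / D^gamma], each of which is
   strictly decreasing in the distance.  Reindexing the target family by the
   bijection, the hypotheses of monotonicity say that every term weakly
   decreases and one strictly, so the diversity strictly increases.  Replacing
   [G_i] by a copy of [G_j] creates a pair at distance [0], whose term is
   [+oo]; the diversity becomes [-oo], below the finite diversity of [S]. *)

Lemma ltr_le_sum (R : numDomainType) (I : finType) (P : pred I)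
    (F G : I -> R) (i0 : I) :
  P i0 -> F i0 < G i0 -> (forall i, P i -> F i <= G i) ->
  \sum_(i | P i) F i < \sum_(i | P i) G i.
Proof.
move=> Pi0 ltFG0 leFG; rewrite (bigD1 i0) //= [ltRHS](bigD1 i0) //=.
by apply: ltr_leD => //; apply: ler_sum => i /andP[/leFG].
Qed.

Lemma ge0_addye (R : numDomainType) (x : \bar R) :
  (0 <= x)%E -> (+oo + x = +oo)%E.
Proof. by move=> x_ge0; rewrite addye // gt_eqF // (lt_le_trans _ x_ge0). Qed.

Section Energy.
Variables (R : realType) (gamma : R).

Lemma lt_inv_powR (x y : R) : 0 < gamma -> 0 < x -> x < y ->
  (y `^ gamma)^-1 < (x `^ gamma)^-1.
Proof.
move=> gamma_gt0 x_gt0 xy; have y_gt0 : 0 < y by apply: lt_trans xy.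
rewrite ltf_pV2 ?posrE ?powR_gt0 //.
by apply: gt0_ltr_powR => //; rewrite nnegrE ltW.
Qed.

Lemma le_inv_powR (x y : R) : 0 < gamma -> 0 < x -> x <= y ->
  (y `^ gamma)^-1 <= (x `^ gamma)^-1.
Proof.
move=> gamma_gt0 x_gt0; rewrite le_eqVlt => /predU1P[-> //|xy].
exact/ltW/lt_inv_powR.
Qed.

Lemma energy_termE (d : R) :
  0 < d -> energy_term gamma d = ((d `^ gamma)^-1)%:E.
Proof. by move=> d_gt0; rewrite /energy_term gt_eqF. Qed.

Lemma energy_term_ge0 (d : R) : (0 <= energy_term gamma d)%E.
Proof.
by rewrite /energy_term; case: ifP => // _; rewrite lee_fin invr_ge0 powR_ge0.
Qed.

Lemma energy_norm_gt0 (N : nat) : (1 < N)%N -> 0 < ((N * (N - 1))%:R : R)^-1.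
Proof. by move=> N_gt1; rewrite invr_gt0 ltr0n; lia. Qed.

Variables (X : Type) (D : X -> X -> R) (N : nat).

Definition energy_sum (G : 'I_N -> X) : R :=
  \sum_(i < N) \sum_(j < N | j != i) (D (G i) (G j) `^ gamma)^-1.

Lemma energy_divE (G : 'I_N -> X) : distinct_fam D G ->
  energy_div gamma D G = (- (((N * (N - 1))%:R)^-1 * energy_sum G))%:E.
Proof.
move=> G_distinct; rewrite /energy_div /energy_sum EFinN EFinM -sumEFin.
congr (- (_ * _))%E; apply: eq_bigr => i _; rewrite -sumEFin.
by apply: eq_bigr => j ji; rewrite energy_termE // G_distinct // eq_sym.
Qed.

Lemma energy_sum_perm (G : 'I_N -> X) (s : 'S_N) :
  energy_sum (G \o s) = energy_sum G.
Proof.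
rewrite /energy_sum [RHS](reindex_inj (@perm_inj _ s)); apply: eq_bigr => i _.
rewrite [RHS](reindex_inj (@perm_inj _ s)); apply: eq_bigl => j.
by rewrite (inj_eq (@perm_inj _ s)).
Qed.

Lemma energy_sum_lt (G G' : 'I_N -> X) (i j : 'I_N) :
  0 < gamma -> distinct_fam D G ->
  (forall k l : 'I_N, l != k -> D (G k) (G l) <= D (G' k) (G' l)) ->
  j != i -> D (G i) (G j) < D (G' i) (G' j) ->
  energy_sum G' < energy_sum G.
Proof.
move=> gamma_gt0 G_distinct leGG' ji ltGG'.
have le_term k l : l != k ->
    (D (G' k) (G' l) `^ gamma)^-1 <= (D (G k) (G l) `^ gamma)^-1.
  move=> lk; apply: le_inv_powR => //; last exact: leGG'.
  by rewrite G_distinct // eq_sym.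
rewrite /energy_sum; apply: (@ltr_le_sum _ _ xpredT _ _ i) => // [|k _].
  apply: (@ltr_le_sum _ _ (fun l => l != i) _ _ j ji _ (le_term i)).
  by apply: lt_inv_powR; rewrite // G_distinct // eq_sym.
by apply: ler_sum => l; apply: le_term.
Qed.

Lemma energy_div_Ny (G : 'I_N -> X) (i j : 'I_N) :
  j != i -> D (G i) (G j) = 0 -> (energy_div gamma D G = -oo)%E.
Proof.
move=> ji Dij0; rewrite /energy_div.
have N_gt1 : (1 < N)%N.
  by have := ltn_ord i; have := ltn_ord j; move: ji; rewrite -val_eqE /=; lia.
have -> : (\sum_(k < N) \sum_(l < N | l != k)
             energy_term gamma (D (G k) (G l)) = +oo)%E.
  rewrite (bigD1 i) //= (bigD1 j) //= Dij0 {1}/energy_term eqxx.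
  rewrite -addeA ge0_addye //.
  by apply: adde_ge0; apply: sume_ge0 => k _;
    [|apply: sume_ge0 => l _]; apply: energy_term_ge0.
by rewrite gt0_muley // lte_fin energy_norm_gt0.
Qed.

End Energy.

Theorem proposition1 (R : realType) (gamma : R) (X : Type) (D : X -> X -> R)
  (N : nat) :
  0 < gamma -> (2 <= N)%N ->
  (forall x y, 0 <= D x y) -> (forall x y, D x y = D y x) ->
  (forall x, D x x = 0) ->
  monotonicity D (energy_div gamma D (N:=N)) /\
  uniqueness D (energy_div gamma D (N:=N)).
Proof.
move=> gamma_gt0 N_gt1 _ _ D0; split.
- move=> G G' s G_distinct G'_distinct leGG' [i [j ltGG']].
  have ji : j != i by apply: contraTneq ltGG' => ->; rewrite !D0 ltxx.
  rewrite !energy_divE // lte_fin ltrN2 ltr_pM2l ?energy_norm_gt0 //.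
  rewrite -(energy_sum_perm gamma D G' s).
  exact: (@energy_sum_lt _ gamma _ D _ G (G' \o s) i j gamma_gt0 G_distinct
            (fun k l _ => leGG' k l) ji ltGG').
- move=> G i j G_distinct ji.
  rewrite (@energy_div_Ny _ gamma _ D _ _ i j ji) /=; last first.
    by rewrite eqxx (negbTE ji) D0.
  by rewrite energy_divE // ltNyr.
Qed.
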